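(* Let $M \ge 2$ be an integer and let $\alpha \in (0,1]$ satisfy $2\lceil 1/\alpha\rceil \le M$ (equivalently, the feasible set below is nonempty). Consider the optimization problem $$\text{maximize } \Bigl(-\sum_{i=1}^M s_i\log s_i + \sum_{i=1}^M t_i \log t_i\Bigr)$$ over $(s_1,t_1,\ldots,s_M,t_M)\in\mathbb{R}^{2M}$ subject to $s_i,t_i\ge 0$, $s_i+t_i\le\alpha$, $s_i t_i = 0$ for all $i\in\{1,\ldots,M\}$, and $\sum_{i=1}^M s_i = \sum_{i=1}^M t_i = 1$. Then the maximum is attained and equals $$g(\alpha) = \log\Bigl(M - \Bigl\lceil \frac1\alpha\Bigr\rceil\Bigr) + \alpha\Bigl\lfloor\frac1\alpha\Bigr\rfloor\log\alpha + \Bigl(1-\alpha\Bigl\lfloor\frac1\alpha\Bigr\rfloor\Bigr)\log\Bigl(1-\alpha\Bigl\lfloor\frac1\alpha\Bigr\rfloor\Bigr).$$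
   Context: Logarithms are natural, with the convention $0\log 0 = 0$. *)

From Stdlib Require Import Reals Lra Lia ZArith.
Open Scope R_scope.

Definition plogp (x : R) : R := if Req_EM_T x 0 then 0 else x * ln x.

Definition floorZ (x : R) : Z := (up x - 1)%Z.
Definition ceilZ (x : R) : Z := (- floorZ (- x))%Z.

Fixpoint rsum (f : nat -> R) (n : nat) : R :=
  match n with
  | O => 0
  | S k => rsum f k + f k
  end.

(* feasible set; coordinates indexed 0..M-1 *)
Definition feasible (M : nat) (alpha : R) (s t : nat -> R) : Prop :=
  (forall i, (i < M)%nat ->
     0 <= s i /\ 0 <= t i /\ s i + t i <= alpha /\ s i * t i = 0) /\
  rsum s M = 1 /\ rsum t M = 1.

Definition objective (M : nat) (s t : nat -> R) : R :=
  rsum (fun i => - plogp (s i) + plogp (t i)) M.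

Definition gval (M : nat) (alpha : R) : R :=
  let k := IZR (floorZ (1 / alpha)) in
  ln (IZR (Z.of_nat M - ceilZ (1 / alpha))) + alpha * k * ln alpha
  + plogp (1 - alpha * k).

From Stdlib Require Import Reals ZArith Lra Lia.
Open Scope R_scope.

(* The two terms are bounded separately.
   - t-side: every t_i/alpha lies in [0,1], and sum x log x over such numbers
     is at most (frac of their sum) log (frac of their sum), because x log x
     is superadditive and "wraps around" when a partial sum passes 1.  After
     rescaling this gives  sum t log t <= alpha k log alpha + r log r  with
     k = floor(1/alpha), r = 1 - alpha k.
   - s-side: t has at least ceil(1/alpha) positive entries (each is at most
     alpha), and s, t have disjoint supports, so s has at most M - ceil(1/alpha)
     positive entries; the entropy of s is then at most log(M - ceil(1/alpha)).
   Attainment.  s uniform on the last M - ceil(1/alpha) coordinates and t equal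
   to alpha on the first k coordinates, r on the next one, 0 elsewhere. *)

(* The basic inequality log x <= x - 1, from exp y >= 1 + y. *)
Lemma ln_le_sub1 (x : R) : 0 < x -> ln x <= x - 1.
Proof.
  intros Hx. pose proof (exp_ineq1_le (ln x)) as Hexp.
  rewrite exp_ln in Hexp by exact Hx. lra.
Qed.

Lemma ln_le_mono (x y : R) : 0 < x -> x <= y -> ln x <= ln y.
Proof.
  intros Hx Hxy. destruct (Req_dec x y) as [->|Hne]; [lra|].
  left. apply ln_increasing; lra.
Qed.

Lemma le_inv_mul (alpha y : R) : 0 < alpha -> y <= 1 / alpha -> alpha * y <= 1.
Proof.
  intros Ha Hy. apply (Rmult_le_compat_l alpha) in Hy; [|lra].
  replace (alpha * (1 / alpha)) with 1 in Hy by (field; lra). exact Hy.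
Qed.

Lemma inv_lt_mul (alpha y : R) : 0 < alpha -> 1 / alpha < y -> 1 < alpha * y.
Proof.
  intros Ha Hy. apply (Rmult_lt_compat_l alpha) in Hy; [|lra].
  replace (alpha * (1 / alpha)) with 1 in Hy by (field; lra). exact Hy.
Qed.

Lemma inv_le_mul (alpha y : R) : 0 < alpha -> 1 / alpha <= y -> 1 <= alpha * y.
Proof.
  intros Ha Hy. apply (Rmult_le_compat_l alpha) in Hy; [|lra].
  replace (alpha * (1 / alpha)) with 1 in Hy by (field; lra). exact Hy.
Qed.

Lemma plogp_0 : plogp 0 = 0.
Proof. unfold plogp. destruct (Req_EM_T 0 0); lra. Qed.

Lemma plogp_pos (x : R) : 0 < x -> plogp x = x * ln x.
Proof. intros Hx. unfold plogp. destruct (Req_EM_T x 0); [lra|reflexivity]. Qed.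

Lemma plogp_1 : plogp 1 = 0.
Proof. rewrite plogp_pos, ln_1 by lra. ring. Qed.

Lemma plogp_tangent (x y : R) : 0 < x -> 0 <= y ->
  x * ln x + (ln x + 1) * (y - x) <= plogp y.
Proof.
  intros Hx Hy. destruct (Req_dec y 0) as [->|Hy0].
  - rewrite plogp_0. nra.
  - rewrite plogp_pos by lra.
    assert (Hratio : ln (x / y) <= x / y - 1)
      by (apply ln_le_sub1, Rdiv_lt_0_compat; lra).
    unfold Rdiv in Hratio.
    rewrite ln_mult, ln_Rinv in Hratio by (try apply Rinv_0_lt_compat; lra).
    assert (Hmul : y * (ln x - ln y) <= y * (x * / y - 1))
      by (apply Rmult_le_compat_l; lra).
    replace (y * (x * / y - 1)) with (x - y) in Hmul by (field; lra).
    nra.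
Qed.

(* Merging two masses increases x log x (log is increasing). *)
Lemma plogp_superadditive (a b : R) : 0 <= a -> 0 <= b ->
  plogp a + plogp b <= plogp (a + b).
Proof.
  intros Ha Hb.
  destruct (Req_dec a 0) as [->|Ha0].
  { rewrite plogp_0, !Rplus_0_l. lra. }
  destruct (Req_dec b 0) as [->|Hb0].
  { rewrite plogp_0, !Rplus_0_r. lra. }
  rewrite !plogp_pos by lra.
  assert (a * ln a <= a * ln (a + b))
    by (apply Rmult_le_compat_l, ln_le_mono; lra).
  assert (b * ln b <= b * ln (a + b))
    by (apply Rmult_le_compat_l, ln_le_mono; lra).
  lra.
Qed.

(* The wrap-around step: two numbers of [0,1] with sum >= 1 have
   a log a + b log b <= (a+b-1) log (a+b-1).  Proved from two tangent lines
   for a <= b, using log a <= log b. *)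
Lemma plogp_wrap (a b : R) : 0 <= a <= 1 -> 0 <= b <= 1 -> 1 <= a + b ->
  plogp a + plogp b <= plogp (a + b - 1).
Proof.
  revert a b.
  assert (Hord : forall a b, 0 <= a -> a <= b -> b <= 1 -> 1 <= a + b ->
            plogp a + plogp b <= plogp (a + b - 1)).
  { intros a b Ha Hab Hb Hs. destruct (Req_dec a 0) as [->|Ha0].
    { replace b with 1 by lra. rewrite plogp_0, plogp_1.
      replace (0 + 1 - 1) with 0 by ring. rewrite plogp_0. lra. }
    pose proof (plogp_tangent a (a + b - 1) ltac:(lra) ltac:(lra)) as Hta.
    pose proof (plogp_tangent b 1 ltac:(lra) ltac:(lra)) as Htb.
    rewrite plogp_1 in Htb. rewrite !plogp_pos by lra.
    assert (ln a <= ln b) by (apply ln_le_mono; lra).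
    nra. }
  intros a b Ha Hb Hs. destruct (Rle_dec a b).
  - apply Hord; lra.
  - rewrite Rplus_comm, (Rplus_comm a b). apply Hord; lra.
Qed.

Lemma plogp_scale (a x : R) : 0 < a -> 0 <= x ->
  plogp x = x * ln a + a * plogp (x / a).
Proof.
  intros Ha Hx. destruct (Req_dec x 0) as [->|Hx0].
  - replace (0 / a) with 0 by (field; lra). rewrite plogp_0. ring.
  - rewrite !plogp_pos by (try apply Rdiv_lt_0_compat; lra).
    unfold Rdiv. rewrite ln_mult, ln_Rinv by (try apply Rinv_0_lt_compat; lra).
    field. lra.
Qed.

(* Pointwise Gibbs inequality: -x log x <= x log N + 1/N - x; summed over a
   support of size at most N it bounds the entropy by log N. *)
Lemma neg_plogp_le (N x : R) : 0 < N -> 0 < x -> - plogp x <= x * ln N + / N - x.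
Proof.
  intros HN Hx. rewrite plogp_pos by lra.
  assert (HNx : 0 < N * x) by nra.
  pose proof (ln_le_sub1 (/ (N * x)) (Rinv_0_lt_compat _ HNx)) as Hl.
  rewrite ln_Rinv, ln_mult in Hl by lra.
  assert (Hmul : x * (- (ln N + ln x)) <= x * (/ (N * x) - 1))
    by (apply Rmult_le_compat_l; lra).
  replace (x * (/ (N * x) - 1)) with (/ N - x) in Hmul by (field; lra).
  lra.
Qed.

Lemma rsum_ext (f g : nat -> R) (n : nat) :
  (forall i, (i < n)%nat -> f i = g i) -> rsum f n = rsum g n.
Proof.
  induction n as [|n IH]; intros Hfg; simpl; [reflexivity|].
  rewrite IH by (intros; apply Hfg; lia). rewrite Hfg by lia. reflexivity.
Qed.

Lemma rsum_plus (f g : nat -> R) (n : nat) :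
  rsum (fun i => f i + g i) n = rsum f n + rsum g n.
Proof. induction n as [|n IH]; simpl; [ring|]. rewrite IH. ring. Qed.

Lemma rsum_scal (c : R) (f : nat -> R) (n : nat) :
  rsum (fun i => c * f i) n = c * rsum f n.
Proof. induction n as [|n IH]; simpl; [ring|]. rewrite IH. ring. Qed.

Lemma rsum_const_on (f : nat -> R) (c : R) (n : nat) :
  (forall i, (i < n)%nat -> f i = c) -> rsum f n = INR n * c.
Proof.
  induction n as [|n IH]; intros Hf; cbn [rsum]; [simpl; ring|].
  rewrite IH by (intros; apply Hf; lia). rewrite Hf, S_INR by lia. ring.
Qed.

(* Summing x log x over numbers in [0,1] only loses mass modulo 1: wrapping
   around by plogp_wrap each time the running sum passes an integer. *)
Lemma plogp_sum_le_frac_exists (u : nat -> R) (n : nat) :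
  (forall i, (i < n)%nat -> 0 <= u i <= 1) ->
  exists m : Z, 0 <= rsum u n - IZR m < 1 /\
    rsum (fun i => plogp (u i)) n <= plogp (rsum u n - IZR m).
Proof.
  induction n as [|n IH]; intros Hu.
  - exists 0%Z. simpl. replace (0 - 0) with 0 by ring. rewrite plogp_0. lra.
  - destruct IH as [m [Hm Hle]]; [intros; apply Hu; lia|].
    assert (Hn : 0 <= u n <= 1) by (apply Hu; lia).
    simpl. set (x := rsum u n - IZR m) in *.
    destruct (Rlt_dec (x + u n) 1).
    + exists m. replace (rsum u n + u n - IZR m) with (x + u n) by (unfold x; ring).
      pose proof (plogp_superadditive x (u n) ltac:(lra) ltac:(lra)). lra.
    + exists (m + 1)%Z. rewrite plus_IZR.
      replace (rsum u n + u n - (IZR m + 1)) with (x + u n - 1) by (unfold x; ring).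
      pose proof (plogp_wrap x (u n) ltac:(lra) ltac:(lra) ltac:(lra)). lra.
Qed.

Lemma plogp_sum_le_frac (u : nat -> R) (n : nat) :
  (forall i, (i < n)%nat -> 0 <= u i <= 1) ->
  rsum (fun i => plogp (u i)) n <= plogp (rsum u n - IZR (Zfloor (rsum u n))).
Proof.
  intros Hu. destruct (plogp_sum_le_frac_exists u n Hu) as [m [Hm Hle]].
  rewrite (Zfloor_eq m) by lra. exact Hle.
Qed.

Lemma plogp_sum_capped (alpha : R) (t : nat -> R) (n : nat) : 0 < alpha ->
  (forall i, (i < n)%nat -> 0 <= t i <= alpha) -> rsum t n = 1 ->
  let k := IZR (Zfloor (1 / alpha)) in
  rsum (fun i => plogp (t i)) n <= alpha * k * ln alpha + plogp (1 - alpha * k).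
Proof.
  intros Ha Ht Hsum k.
  assert (Hu : forall i, (i < n)%nat -> 0 <= t i / alpha <= 1).
  { intros i Hi. destruct (Ht i Hi). split.
    - unfold Rdiv. apply Rmult_le_pos; [|left; apply Rinv_0_lt_compat]; lra.
    - unfold Rdiv. rewrite <- (Rinv_r alpha) by lra.
      apply Rmult_le_compat_r; [left; apply Rinv_0_lt_compat|]; lra. }
  pose proof (plogp_sum_le_frac _ n Hu) as Hfrac.
  assert (Hsu : rsum (fun i => t i / alpha) n = 1 / alpha).
  { rewrite (rsum_ext _ (fun i => / alpha * t i)) by (intros; unfold Rdiv; ring).
    rewrite rsum_scal, Hsum. unfold Rdiv. ring. }
  rewrite Hsu in Hfrac. fold k in Hfrac.
  pose proof (Zfloor_bound (1 / alpha)) as [Hk _]. fold k in Hk.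
  assert (Hak : alpha * k <= 1) by (apply le_inv_mul; assumption).
  rewrite (rsum_ext _ (fun i => ln alpha * t i + alpha * plogp (t i / alpha)))
    by (intros i Hi; destruct (Ht i Hi); rewrite (plogp_scale alpha) by lra; ring).
  rewrite rsum_plus, !rsum_scal, Hsum.
  rewrite (plogp_scale alpha (1 - alpha * k)) by lra.
  replace ((1 - alpha * k) / alpha) with (1 / alpha - k) by (field; lra).
  apply Rmult_le_compat_l with (r := alpha) in Hfrac; lra.
Qed.

Fixpoint nsupp (f : nat -> R) (n : nat) : nat :=
  match n with
  | O => O
  | S k => (nsupp f k + if Rlt_dec 0 (f k) then 1 else 0)%nat
  end.

Lemma nsupp_disjoint (s t : nat -> R) (n : nat) :
  (forall i, (i < n)%nat -> s i * t i = 0) ->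
  (nsupp s n + nsupp t n <= n)%nat.
Proof.
  induction n as [|n IH]; intros Hst; cbn [nsupp]; [lia|].
  specialize (IH ltac:(intros; apply Hst; lia)).
  assert (Hn := Hst n ltac:(lia)).
  destruct (Rlt_dec 0 (s n)), (Rlt_dec 0 (t n)); try lia.
  assert (0 < s n * t n) by (apply Rmult_lt_0_compat; lra). lra.
Qed.

Lemma rsum_le_cap_nsupp (alpha : R) (t : nat -> R) (n : nat) :
  (forall i, (i < n)%nat -> 0 <= t i <= alpha) ->
  rsum t n <= alpha * INR (nsupp t n).
Proof.
  induction n as [|n IH]; intros Ht; cbn [rsum nsupp]; [simpl; lra|].
  specialize (IH ltac:(intros; apply Ht; lia)).
  assert (Hn := Ht n ltac:(lia)). rewrite plus_INR.
  destruct (Rlt_dec 0 (t n)); simpl; lra.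
Qed.

Lemma entropy_le_support (N : R) (s : nat -> R) (n : nat) : 0 < N ->
  (forall i, (i < n)%nat -> 0 <= s i) ->
  rsum (fun i => - plogp (s i)) n <= (ln N - 1) * rsum s n + INR (nsupp s n) / N.
Proof.
  intros HN. induction n as [|n IH]; intros Hs; cbn [rsum nsupp]; [simpl; lra|].
  specialize (IH ltac:(intros; apply Hs; lia)).
  assert (Hn := Hs n ltac:(lia)). rewrite plus_INR.
  destruct (Rlt_dec 0 (s n)) as [Hpos|Hzero].
  - pose proof (neg_plogp_le N (s n) HN Hpos). simpl. unfold Rdiv in *. nra.
  - replace (s n) with 0 by lra. rewrite plogp_0. simpl. unfold Rdiv in *. nra.
Qed.

Lemma entropy_le_ln (N : R) (s : nat -> R) (n : nat) : 0 < N ->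
  (forall i, (i < n)%nat -> 0 <= s i) -> rsum s n = 1 -> INR (nsupp s n) <= N ->
  rsum (fun i => - plogp (s i)) n <= ln N.
Proof.
  intros HN Hs Hsum Hsupp.
  pose proof (entropy_le_support N s n HN Hs) as Hle. rewrite Hsum in Hle.
  assert (INR (nsupp s n) / N <= 1).
  { unfold Rdiv. rewrite <- (Rinv_r N) by lra.
    apply Rmult_le_compat_r; [left; apply Rinv_0_lt_compat|]; lra. }
  lra.
Qed.

Lemma Zceil_least (x : R) (m : Z) : x <= IZR m -> (Zceil x <= m)%Z.
Proof.
  intros Hx. pose proof (Zceil_bound x) as [Hc _].
  assert (Zceil x < m + 1)%Z by (apply lt_IZR; rewrite plus_IZR; simpl; lra).
  lia.
Qed.

Lemma objective_le_gval (M : nat) (alpha : R) (s t : nat -> R) : 0 < alpha ->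
  (2 * ceilZ (1 / alpha) <= Z.of_nat M)%Z ->
  feasible M alpha s t -> objective M s t <= gval M alpha.
Proof.
  intros Ha Hfeas [Hpt [Hs Ht]].
  change (ceilZ (1 / alpha)) with (Zceil (1 / alpha)) in Hfeas.
  unfold objective, gval. change (floorZ (1 / alpha)) with (Zfloor (1 / alpha)).
  change (ceilZ (1 / alpha)) with (Zceil (1 / alpha)). cbv zeta.
  set (c := Zceil (1 / alpha)) in *. rewrite rsum_plus.
  pose proof (plogp_sum_capped alpha t M Ha
    ltac:(intros i Hi; destruct (Hpt i Hi) as [? [? [? ?]]]; lra) Ht) as Hpart_t.
  cbv zeta in Hpart_t.
  (* t has at least 1/alpha, hence at least c, positive entries *)
  assert (Hct : (c <= Z.of_nat (nsupp t M))%Z).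
  { apply Zceil_least. rewrite <- INR_IZR_INZ.
    pose proof (rsum_le_cap_nsupp alpha t M
      ltac:(intros i Hi; destruct (Hpt i Hi) as [? [? [? ?]]]; lra)) as Hcap.
    rewrite Ht in Hcap. apply (Rmult_le_reg_l alpha); [lra|].
    replace (alpha * (1 / alpha)) with 1 by (field; lra). lra. }
  assert (Hc0 : (0 < c)%Z).
  { apply lt_IZR. pose proof (Zceil_bound (1 / alpha)) as [_ Hc].
    assert (0 < 1 / alpha) by (apply Rdiv_lt_0_compat; lra). fold c in Hc. simpl. lra. }
  pose proof (nsupp_disjoint s t M
    ltac:(intros i Hi; destruct (Hpt i Hi) as [? [? [? ?]]]; auto)) as Hdisj.
  (* hence s has at most M - c positive entries *)
  pose proof (entropy_le_ln (IZR (Z.of_nat M - c)) s M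
    ltac:(apply IZR_lt; lia)
    ltac:(intros i Hi; destruct (Hpt i Hi) as [? [? [? ?]]]; lra) Hs
    ltac:(rewrite INR_IZR_INZ; apply IZR_le; lia)) as Hpart_s.
  lra.
Qed.

Definition capped_profile (k : nat) (a r : R) (i : nat) : R :=
  if (i <? k)%nat then a else if (i =? k)%nat then r else 0.

Definition shifted_uniform (c : nat) (v : R) (i : nat) : R :=
  if (i <? c)%nat then 0 else v.

Lemma rsum_capped_profile (h : R -> R) (k n : nat) (a r : R) : h 0 = 0 -> (k < n)%nat ->
  rsum (fun i => h (capped_profile k a r i)) n = INR k * h a + h r.
Proof.
  intros Hh0. induction n as [|n IH]; intros Hkn; [lia|]. cbn [rsum].
  unfold capped_profile at 2.
  destruct (Nat.eq_dec n k) as [->|Hne].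
  - rewrite Nat.ltb_irrefl, Nat.eqb_refl.
    rewrite (rsum_const_on _ (h a)); [reflexivity|].
    intros i Hi. unfold capped_profile. destruct (Nat.ltb_spec i k); [reflexivity|lia].
  - rewrite IH by lia.
    destruct (Nat.ltb_spec n k); [lia|]. destruct (Nat.eqb_spec n k); [lia|].
    rewrite Hh0. ring.
Qed.

Lemma rsum_shifted_uniform (h : R -> R) (c n : nat) (v : R) : h 0 = 0 -> (c <= n)%nat ->
  rsum (fun i => h (shifted_uniform c v i)) n = INR (n - c) * h v.
Proof.
  intros Hh0. induction n as [|n IH]; intros Hcn.
  - replace c with 0%nat by lia. simpl. ring.
  - destruct (Nat.eq_dec c (S n)) as [->|Hne].
    + rewrite Nat.sub_diag, (rsum_const_on _ 0); [simpl; ring|].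
      intros i Hi. unfold shifted_uniform. destruct (Nat.ltb_spec i (S n)); [exact Hh0|lia].
    + cbn [rsum]. rewrite IH by lia. unfold shifted_uniform at 1.
      destruct (Nat.ltb_spec n c); [lia|].
      replace (S n - c)%nat with (S (n - c)) by lia. rewrite S_INR. ring.
Qed.

(* The optimizer, for k = floor(1/alpha) and c = ceil(1/alpha), described only
   through the properties of k and c it needs. *)
Section Optimizer.

Variables (M k c : nat) (alpha : R).
Hypothesis alpha_pos : 0 < alpha.
Hypothesis k_full : alpha * INR k <= 1.
Hypothesis k_max : 1 < alpha * (INR k + 1).
Hypothesis c_cover : 1 <= alpha * INR c.
Hypothesis k_le_c : (k <= c)%nat.
Hypothesis c_eq_k : c = k -> alpha * INR k = 1.
Hypothesis room : (2 * c <= M)%nat.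

Let N : R := INR (M - c).
Let r : R := 1 - alpha * INR k.

Definition opt_s : nat -> R := shifted_uniform c (/ N).
Definition opt_t : nat -> R := capped_profile k alpha r.

Lemma opt_c_pos : (0 < c)%nat.
Proof. destruct c; [simpl in c_cover; lra|lia]. Qed.

Lemma opt_N_pos : 0 < N.
Proof. unfold N. apply lt_0_INR. pose proof opt_c_pos. lia. Qed.

Lemma opt_inv_N_le_alpha : / N <= alpha.
Proof.
  assert (HcN : INR c <= N) by (apply le_INR; lia).
  pose proof opt_N_pos. apply (Rmult_le_reg_l N); [lra|].
  rewrite Rinv_r by lra. nra.
Qed.

(* Both coordinates are never positive together: for i >= c only i = k = c
   could carry t, and then r = 0. *)
Lemma opt_feasible : feasible M alpha opt_s opt_t.
Proof.
  pose proof opt_N_pos as HN. pose proof opt_inv_N_le_alpha as HNa.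
  assert (Hk : (k < M)%nat) by (pose proof opt_c_pos; lia).
  split; [|split].
  - intros i Hi. unfold opt_s, opt_t, shifted_uniform, capped_profile, r.
    assert (0 < / N) by (apply Rinv_0_lt_compat; lra).
    destruct (Nat.ltb_spec i c), (Nat.ltb_spec i k), (Nat.eqb_spec i k);
      try lia; try (repeat split; lra).
    subst i. rewrite c_eq_k by lia. repeat split; lra.
  - unfold opt_s. rewrite (rsum_shifted_uniform (fun x => x)) by (reflexivity || lia).
    fold N. field. lra.
  - unfold opt_t. rewrite (rsum_capped_profile (fun x => x)) by (reflexivity || lia).
    unfold r. ring.
Qed.

Lemma opt_objective :
  objective M opt_s opt_t = ln N + alpha * INR k * ln alpha + plogp r.
Proof.
  pose proof opt_N_pos as HN.
  assert (Hk : (k < M)%nat) by (pose proof opt_c_pos; lia).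
  unfold objective, opt_s, opt_t. rewrite rsum_plus.
  rewrite (rsum_shifted_uniform (fun x => - plogp x))
    by (rewrite ?plogp_0; lra || lia).
  rewrite (rsum_capped_profile plogp) by (exact plogp_0 || lia).
  fold N. rewrite !plogp_pos by (try apply Rinv_0_lt_compat; lra).
  rewrite ln_Rinv by lra. field. lra.
Qed.

End Optimizer.

Theorem lemma1 (M : nat) (alpha : R)
  (hM : (2 <= M)%nat) (ha0 : 0 < alpha) (ha1 : alpha <= 1)
  (hfeas : (2 * ceilZ (1 / alpha) <= Z.of_nat M)%Z) :
  (exists s t : nat -> R, feasible M alpha s t /\ objective M s t = gval M alpha) /\
  (forall s t : nat -> R, feasible M alpha s t -> objective M s t <= gval M alpha).
Proof.
  split; [|intros s t; apply objective_le_gval; assumption].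
  unfold gval. change (floorZ (1 / alpha)) with (Zfloor (1 / alpha)).
  change (ceilZ (1 / alpha)) with (Zceil (1 / alpha)) in *. cbv zeta.
  pose proof (Zfloor_bound (1 / alpha)) as [Hfl Hfu].
  pose proof (Zfloor_ceil_bound (1 / alpha)) as [_ Hcl].
  assert (Hk0 : (0 <= Zfloor (1 / alpha))%Z).
  { apply Zfloor_lub. left. apply Rdiv_lt_0_compat; lra. }
  assert (Hkc : (Zfloor (1 / alpha) <= Zceil (1 / alpha))%Z) by (apply le_IZR; lra).
  set (k := Z.to_nat (Zfloor (1 / alpha))). set (c := Z.to_nat (Zceil (1 / alpha))).
  assert (Ek : Zfloor (1 / alpha) = Z.of_nat k) by (unfold k; lia).
  assert (Ec : Zceil (1 / alpha) = Z.of_nat c) by (unfold c; lia).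
  rewrite Ek, Ec in *. rewrite <- INR_IZR_INZ in *.
  rewrite <- Nat2Z.inj_sub, <- INR_IZR_INZ by lia.
  assert (k_full : alpha * INR k <= 1) by (apply le_inv_mul; lra).
  assert (k_max : 1 < alpha * (INR k + 1)) by (apply inv_lt_mul; lra).
  assert (c_cover : 1 <= alpha * INR c) by (apply inv_le_mul; lra).
  assert (c_eq_k : c = k -> alpha * INR k = 1).
  { intros ->. apply Rle_antisym; [exact k_full|exact c_cover]. }
  exists (opt_s M c), (opt_t k alpha). split.
  - apply opt_feasible; first [assumption | lia].
  - apply opt_objective; first [assumption | lia].
Qed.
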